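(* Let $a<b$ be coprime positive integers with $\alpha=\sqrt{b/a}\notin\mathbb{Q}$. Let $\Gamma\subset\mathbb{Z}^2$ be a full-rank lattice with basis $\mathbf e_1=(\lambda_1,\mu_1)$, $\mathbf e_2=(\lambda_2,\mu_2)$ satisfying $\|\mathbf e_1\|\le2\nu_2$ and $\|\mathbf e_2\|\le2\nu_1$, and let $\theta=-\frac{\lambda_1-\alpha\mu_1}{\lambda_2-\alpha\mu_2}$. Then for all positive integers $u,v$, $$\Big|\frac uv-\alpha\Big|\ge\frac{\Xi(\alpha)}{v^2}\quad\text{and}\quad\Big|\frac uv-\theta\Big|\ge\frac{\xi(\theta)}{v^2},\qquad\text{where } \Xi(\alpha)=(4\sqrt{ab})^{-1},\ \xi(\theta)=(162\,b\det\Gamma)^{-1}.$$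
   Context: $\|(x,y)\|=\max(|x|,|y|)$, and $\nu_1\le\nu_2$ are the successive minima of $\Gamma$ with respect to this norm. *)

From Stdlib Require Import Reals ZArith Lra Lia.
Open Scope R_scope.

Definition vec := (Z * Z)%type.

Definition supnorm (v : vec) : Z := Z.max (Z.abs (fst v)) (Z.abs (snd v)).

Definition det2 (v w : vec) : Z := (fst v * snd w - snd v * fst w)%Z.

Definition in_lattice (e1 e2 v : vec) : Prop :=
  exists m n : Z, fst v = (m * fst e1 + n * fst e2)%Z /\
                  snd v = (m * snd e1 + n * snd e2)%Z.

Definition full_rank (e1 e2 : vec) : Prop := det2 e1 e2 <> 0%Z.

Definition lattice_det (e1 e2 : vec) : Z := Z.abs (det2 e1 e2).

Definition is_first_minimum (e1 e2 : vec) (nu : Z) : Prop :=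
  (exists v, in_lattice e1 e2 v /\ v <> (0%Z, 0%Z) /\ supnorm v <= nu)%Z /\
  (forall v, in_lattice e1 e2 v -> v <> (0%Z, 0%Z) -> nu <= supnorm v)%Z.

Definition is_second_minimum (e1 e2 : vec) (nu : Z) : Prop :=
  (exists v w, in_lattice e1 e2 v /\ in_lattice e1 e2 w /\ det2 v w <> 0 /\
     supnorm v <= nu /\ supnorm w <= nu)%Z /\
  (forall v w, in_lattice e1 e2 v -> in_lattice e1 e2 w -> det2 v w <> 0 ->
     nu <= Z.max (supnorm v) (supnorm w))%Z.

Definition irrational (x : R) : Prop :=
  ~ exists p q : Z, q <> 0%Z /\ x = IZR p / IZR q.

From Stdlib Require Import Reals ZArith Lra Lia.
Open Scope R_scope.

(* For a nonzero integer vector (x, y), a x^2 - b y^2 = a (x - alpha y) (x + alpha y) is a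
   nonzero integer since alpha is irrational, so |x - alpha y| |x + alpha y| >= 1/a.
   For alpha, take (x, y) = (u, v).  For theta, take the lattice vector u e2 + v e1, for which
   x - alpha y = v (lambda2 - alpha mu2) (u/v - theta); the conjugate factor x + alpha y is
   bounded through the norms of e1 and e2, which the hypotheses tie to nu1 nu2 <= 2 det Gamma.
   That last bound holds because a shortest vector f of Gamma is primitive, hence part of a
   basis (f, g), and g can be shifted by a multiple of f until its minor coordinate is at most
   half the major coordinate of f. *)

Definition vcomb (m n : Z) (v w : vec) : vec :=
  ((m * fst v + n * fst w)%Z, (m * snd v + n * snd w)%Z).

Lemma in_lattice_vcomb (e1 e2 : vec) (m n : Z) : in_lattice e1 e2 (vcomb m n e1 e2).
Proof. exists m, n; split; reflexivity. Qed.

Lemma in_lattice_vcomb_closed (e1 e2 v w : vec) (m n : Z) :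
  in_lattice e1 e2 v -> in_lattice e1 e2 w -> in_lattice e1 e2 (vcomb m n v w).
Proof.
  intros [mv [nv [Hv1 Hv2]]] [mw [nw [Hw1 Hw2]]].
  exists (m * mv + n * mw)%Z, (m * nv + n * nw)%Z; cbn [vcomb fst snd].
  rewrite Hv1, Hv2, Hw1, Hw2; split; ring.
Qed.

Lemma det2_vcomb (v w : vec) (m n m' n' : Z) :
  det2 (vcomb m n v w) (vcomb m' n' v w) = ((m * n' - n * m') * det2 v w)%Z.
Proof. unfold det2, vcomb; cbn [fst snd]; ring. Qed.

Lemma det2_nonzero_neq0 (v w : vec) : det2 v w <> 0%Z -> v <> (0%Z, 0%Z) /\ w <> (0%Z, 0%Z).
Proof. unfold det2; intros Hd; split; intros ->; cbn in Hd; lia. Qed.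

Lemma supnorm_ge1 (v : vec) : v <> (0%Z, 0%Z) -> (1 <= supnorm v)%Z.
Proof.
  destruct v as [p q]; unfold supnorm; cbn [fst snd]; intros H.
  destruct (Z.eq_dec p 0), (Z.eq_dec q 0); subst; try congruence; lia.
Qed.

Lemma supnorm_scale (c x y : Z) :
  supnorm ((c * x)%Z, (c * y)%Z) = (Z.abs c * supnorm (x, y))%Z.
Proof.
  unfold supnorm; cbn [fst snd]; rewrite !Z.abs_mul.
  apply Z.mul_max_distr_nonneg_l; lia.
Qed.

Lemma first_minimum_attained (e1 e2 : vec) (nu1 : Z) :
  is_first_minimum e1 e2 nu1 ->
  exists m n, vcomb m n e1 e2 <> (0%Z, 0%Z) /\ supnorm (vcomb m n e1 e2) = nu1.
Proof.
  intros [[f [[m [n [Hf1 Hf2]]] [Hf0 Hfn]]] Hmin].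
  assert (Hf : f = vcomb m n e1 e2) by (destruct f; cbn in *; subst; reflexivity).
  subst f; exists m, n; split; [exact Hf0|].
  apply Z.le_antisymm; [exact Hfn | apply Hmin; [apply in_lattice_vcomb | exact Hf0]].
Qed.

Lemma first_minimum_le_second (e1 e2 : vec) (nu1 nu2 : Z) :
  is_first_minimum e1 e2 nu1 -> is_second_minimum e1 e2 nu2 -> (nu1 <= nu2)%Z.
Proof.
  intros [_ Hmin] [[v [w [Hv [_ [Hvw [Hvn _]]]]]] _].
  destruct (det2_nonzero_neq0 v w Hvw) as [Hv0 _].
  specialize (Hmin v Hv Hv0); lia.
Qed.

(* Dividing by the gcd of the coordinates would give a shorter nonzero lattice vector. *)
Lemma shortest_vector_primitive (e1 e2 : vec) (m n : Z) :
  vcomb m n e1 e2 <> (0%Z, 0%Z) ->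
  (forall w, in_lattice e1 e2 w -> w <> (0%Z, 0%Z) ->
     (supnorm (vcomb m n e1 e2) <= supnorm w)%Z) ->
  Z.gcd m n = 1%Z.
Proof.
  intros Hf0 Hmin.
  set (c := Z.gcd m n).
  destruct (Z.gcd_divide_l m n) as [m1 Hm1]; destruct (Z.gcd_divide_r m n) as [n1 Hn1].
  fold c in Hm1, Hn1.
  assert (Hscale : vcomb m n e1 e2 =
    ((c * fst (vcomb m1 n1 e1 e2))%Z, (c * snd (vcomb m1 n1 e1 e2))%Z))
    by (rewrite Hm1, Hn1; unfold vcomb; cbn [fst snd]; f_equal; ring).
  assert (Hw0 : vcomb m1 n1 e1 e2 <> (0%Z, 0%Z)).
  { intros E; apply Hf0; rewrite Hscale, E; cbn; f_equal; ring. }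
  specialize (Hmin _ (in_lattice_vcomb e1 e2 m1 n1) Hw0).
  rewrite Hscale, supnorm_scale, <- surjective_pairing in Hmin.
  pose proof (supnorm_ge1 _ Hw0).
  assert (Hc0 : (0 <= c)%Z) by apply Z.gcd_nonneg.
  assert (c <> 0%Z).
  { intros Hc; apply Hf0; rewrite Hscale, Hc; reflexivity. }
  rewrite Z.abs_eq in Hmin by lia. nia.
Qed.

Lemma primitive_vector_completion (e1 e2 : vec) (m n : Z) :
  Z.gcd m n = 1%Z -> exists m' n', det2 (vcomb m n e1 e2) (vcomb m' n' e1 e2) = det2 e1 e2.
Proof.
  intros Hg; destruct (Z.gcd_bezout m n 1 Hg) as [x [y Hxy]].
  exists (- y)%Z, x; rewrite det2_vcomb.
  replace (m * x - n * - y)%Z with 1%Z by lia; ring.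
Qed.

Lemma exists_centered_residue (r p : Z) :
  p <> 0%Z -> exists k, (2 * Z.abs (r + k * p) <= Z.abs p)%Z.
Proof.
  intros Hp.
  pose proof (Z.div_mod r (Z.abs p) ltac:(lia)) as Hd.
  pose proof (Z.mod_pos_bound r (Z.abs p) ltac:(lia)) as Hb.
  set (q := (r / Z.abs p)%Z) in *; set (s := (r mod Z.abs p)%Z) in *.
  destruct (Z_le_gt_dec (2 * s) (Z.abs p)).
  - exists (- q * Z.sgn p)%Z.
    replace (r + - q * Z.sgn p * p)%Z with s by (rewrite Hd at 1; rewrite <- Z.sgn_abs; ring).
    lia.
  - exists ((- q - 1) * Z.sgn p)%Z.
    replace (r + (- q - 1) * Z.sgn p * p)%Z with (s - Z.abs p)%Z
      by (rewrite Hd at 1; rewrite <- Z.sgn_abs; ring).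
    lia.
Qed.

Lemma reduce_partner_major (p q r s : Z) :
  (Z.abs q <= Z.abs p)%Z -> p <> 0%Z ->
  (forall k, Z.abs p <= supnorm ((r + k * p)%Z, (s + k * q)%Z))%Z ->
  exists k, (Z.abs p * supnorm ((r + k * p)%Z, (s + k * q)%Z) <= 2 * Z.abs (p * s - q * r))%Z.
Proof.
  intros Hqp Hp Hmin.
  destruct (exists_centered_residue r p Hp) as [k Hk]; exists k.
  specialize (Hmin k); unfold supnorm in *; cbn [fst snd] in *.
  set (r' := (r + k * p)%Z) in *; set (s' := (s + k * q)%Z).
  assert (Hdet : (p * s - q * r = p * s' - q * r')%Z) by (unfold r', s'; ring).
  assert (Hs' : (Z.abs p <= Z.abs s')%Z) by lia.
  rewrite Z.max_r, Hdet by lia.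
  (* |p s'| <= |det| + |q| |r'| and 2 |q| |r'| <= |p|^2 <= |p| |s'| *)
  pose proof (Z.abs_triangle (p * s' - q * r') (q * r')) as Htri.
  replace (p * s' - q * r' + q * r')%Z with (p * s')%Z in Htri by ring.
  rewrite !Z.abs_mul in Htri.
  nia.
Qed.

Lemma reduce_partner (f g : vec) :
  f <> (0%Z, 0%Z) ->
  (forall k, supnorm f <= supnorm (vcomb 1 k g f))%Z ->
  exists k, (supnorm f * supnorm (vcomb 1 k g f) <= 2 * Z.abs (det2 f g))%Z.
Proof.
  destruct f as [p q], g as [r s]; unfold vcomb, det2, supnorm; cbn [fst snd].
  intros Hf Hmin.
  destruct (Z_le_gt_dec (Z.abs q) (Z.abs p)) as [Hqp | Hpq].
  - destruct (reduce_partner_major p q r s Hqp) as [k Hk].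
    + intros ->; apply Hf; f_equal; lia.
    + intros k; specialize (Hmin k); rewrite Z.max_l in Hmin by lia.
      unfold supnorm; cbn [fst snd]; rewrite !Z.mul_1_l in Hmin; lia.
    + exists k; unfold supnorm in Hk; cbn [fst snd] in Hk.
      rewrite Z.max_l, !Z.mul_1_l by lia; lia.
  - destruct (reduce_partner_major q p s r) as [k Hk]; [lia | lia | |].
    + intros k; specialize (Hmin k); rewrite Z.max_r in Hmin by lia.
      unfold supnorm; cbn [fst snd]; rewrite !Z.mul_1_l in Hmin; lia.
    + exists k; unfold supnorm in Hk; cbn [fst snd] in Hk.
      rewrite Z.max_r, !Z.mul_1_l, Z.max_comm by lia.
      replace (p * s - q * r)%Z with (- (q * r - p * s))%Z by ring.
      rewrite Z.abs_opp; lia.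
Qed.

Lemma successive_minima_product (e1 e2 : vec) (nu1 nu2 : Z) :
  full_rank e1 e2 -> is_first_minimum e1 e2 nu1 -> is_second_minimum e1 e2 nu2 ->
  (nu1 * nu2 <= 2 * lattice_det e1 e2)%Z.
Proof.
  intros Hfr Hm1 [_ Hm2].
  destruct (first_minimum_attained e1 e2 nu1 Hm1) as [m [n [Hf0 Hfn]]].
  set (f := vcomb m n e1 e2) in *.
  assert (Hshort : forall w, in_lattice e1 e2 w -> w <> (0%Z, 0%Z) -> (supnorm f <= supnorm w)%Z)
    by (rewrite Hfn; apply Hm1).
  destruct (primitive_vector_completion e1 e2 m n (shortest_vector_primitive e1 e2 m n Hf0 Hshort))
    as [m' [n' Hdet]].
  fold f in Hdet; set (g := vcomb m' n' e1 e2) in *.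
  assert (Hlat : forall k, in_lattice e1 e2 (vcomb 1 k g f))
    by (intros k; apply in_lattice_vcomb_closed; apply in_lattice_vcomb).
  assert (Hdetk : forall k, det2 f (vcomb 1 k g f) = det2 e1 e2).
  { intros k; rewrite <- Hdet; unfold det2, vcomb; cbn [fst snd]; ring. }
  assert (Hk0 : forall k, det2 f (vcomb 1 k g f) <> 0%Z) by (intros k; rewrite Hdetk; exact Hfr).
  destruct (reduce_partner f g Hf0) as [k Hk].
  { intros k; apply Hshort; [apply Hlat | exact (proj2 (det2_nonzero_neq0 _ _ (Hk0 k)))]. }
  specialize (Hm2 f (vcomb 1 k g f) (in_lattice_vcomb e1 e2 m n) (Hlat k) (Hk0 k)).
  assert (Hmax : Z.max (supnorm f) (supnorm (vcomb 1 k g f)) = supnorm (vcomb 1 k g f)).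
  { apply Z.max_r, Hshort; [apply Hlat | exact (proj2 (det2_nonzero_neq0 _ _ (Hk0 k)))]. }
  unfold lattice_det; rewrite <- Hdet, <- Hfn.
  rewrite Hmax in Hm2; pose proof (supnorm_ge1 _ Hf0).
  eapply Z.le_trans; [apply Z.mul_le_mono_nonneg_l; [lia | exact Hm2] | exact Hk].
Qed.

Lemma reduced_basis_norms (e1 e2 : vec) (nu1 nu2 : Z) :
  full_rank e1 e2 -> is_first_minimum e1 e2 nu1 -> is_second_minimum e1 e2 nu2 ->
  (supnorm e1 <= 2 * nu2)%Z -> (supnorm e2 <= 2 * nu1)%Z ->
  (2 * supnorm e1 * supnorm e2 + supnorm e2 * supnorm e2 <= 24 * lattice_det e1 e2)%Z.
Proof.
  intros Hfr Hm1 Hm2 HN1 HN2.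
  pose proof (successive_minima_product e1 e2 nu1 nu2 Hfr Hm1 Hm2).
  pose proof (first_minimum_le_second e1 e2 nu1 nu2 Hm1 Hm2).
  assert (0 <= supnorm e1 /\ 0 <= supnorm e2)%Z by (unfold supnorm; lia).
  nia.
Qed.

Definition lin_form (t : R) (w : vec) : R := IZR (fst w) - t * IZR (snd w).

Lemma lin_form_vcomb (t : R) (m n : Z) (v w : vec) :
  lin_form t (vcomb m n v w) = IZR m * lin_form t v + IZR n * lin_form t w.
Proof. unfold lin_form, vcomb; cbn [fst snd]; rewrite !plus_IZR, !mult_IZR; ring. Qed.

Lemma lin_form_bound (t : R) (w : vec) :
  Rabs (lin_form t w) <= (1 + Rabs t) * IZR (supnorm w).
Proof.
  destruct w as [l m]; unfold lin_form, supnorm; cbn [fst snd].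
  assert (Hl : Rabs (IZR l) <= IZR (Z.max (Z.abs l) (Z.abs m)))
    by (rewrite <- abs_IZR; apply IZR_le; lia).
  assert (Hm : Rabs (IZR m) <= IZR (Z.max (Z.abs l) (Z.abs m)))
    by (rewrite <- abs_IZR; apply IZR_le; lia).
  pose proof (Rabs_triang (IZR l) (- (t * IZR m))) as Htri.
  rewrite Rabs_Ropp, Rabs_mult in Htri.
  pose proof (Rabs_pos t); pose proof (Rabs_pos (IZR m)).
  unfold Rminus; nra.
Qed.

Lemma inv_le_of_cases (c V d d0 : R) :
  0 < c -> 1 <= V -> 1 <= c * d0 -> (d < d0 -> 1 <= c * V * d) -> / c / V <= d.
Proof.
  intros Hc HV Hd0 Hsmall.
  assert (Hprod : 1 <= c * V * d).
  { destruct (Rlt_le_dec d d0) as [Hlt | Hge]; [exact (Hsmall Hlt) |].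
    assert (0 < d0) by (destruct (Rle_lt_dec d0 0); [nra | assumption]).
    assert (c * d0 <= c * d) by (apply Rmult_le_compat_l; lra).
    assert (c * d <= c * d * V) by (rewrite <- (Rmult_1_r (c * d)) at 1; apply Rmult_le_compat_l; nra).
    nra. }
  apply (Rmult_le_reg_l (c * V)); [nra |].
  replace (c * V * (/ c / V)) with 1 by (field; lra).
  exact Hprod.
Qed.

Section QuadraticIrrational.

Variables a b : Z.
Hypothesis a_pos : (0 < a)%Z.
Hypothesis a_le_b : (a <= b)%Z.
Hypothesis alpha_irrational : irrational (sqrt (IZR b / IZR a)).

Let alpha := sqrt (IZR b / IZR a).

Lemma alpha_sq : IZR a * (alpha * alpha) = IZR b.
Proof.
  assert (0 < IZR a) by (apply IZR_lt; lia).
  unfold alpha; rewrite sqrt_sqrt; [field; lra |].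
  apply Rmult_le_pos; [apply IZR_le; lia | left; apply Rinv_0_lt_compat; lra].
Qed.

Lemma one_le_alpha : 1 <= alpha.
Proof.
  pose proof alpha_sq.
  assert (0 <= alpha) by apply sqrt_pos.
  assert (IZR a <= IZR b) by (apply IZR_le; lia).
  assert (0 < IZR a) by (apply IZR_lt; lia).
  assert (1 <= alpha * alpha).
  { apply (Rmult_le_reg_l (IZR a)); lra. }
  nra.
Qed.

Lemma sqrt_ab : sqrt (IZR a * IZR b) = IZR a * alpha.
Proof.
  pose proof one_le_alpha. assert (0 < IZR a) by (apply IZR_lt; lia).
  rewrite <- alpha_sq.
  replace (IZR a * (IZR a * (alpha * alpha))) with ((IZR a * alpha) * (IZR a * alpha)) by ring.
  apply sqrt_square; nra.
Qed.

Lemma norm_form_nonzero (x y : Z) : (x, y) <> (0%Z, 0%Z) -> (a * x * x - b * y * y)%Z <> 0%Z.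
Proof.
  intros Hxy E.
  destruct (Z.eq_dec y 0) as [-> | Hy]; [apply Hxy; f_equal; nia |].
  apply alpha_irrational; exists (Z.abs x), (Z.abs y); split; [lia |].
  assert (Er : IZR b / IZR a = (IZR (Z.abs x) / IZR (Z.abs y)) * (IZR (Z.abs x) / IZR (Z.abs y))).
  { assert (IZR a <> 0) by (apply not_0_IZR; lia).
    assert (IZR (Z.abs y) <> 0) by (apply not_0_IZR; lia).
    assert (Eb : IZR b * IZR (Z.abs y * Z.abs y) = IZR a * IZR (Z.abs x * Z.abs x))
      by (rewrite <- !mult_IZR; f_equal; nia).
    rewrite !mult_IZR in Eb.
    field_simplify_eq; [nra | auto]. }
  rewrite Er; apply sqrt_square.
  apply Rmult_le_pos; [apply IZR_le; lia | left; apply Rinv_0_lt_compat, IZR_lt; lia].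
Qed.

Lemma norm_form_lower_bound (w : vec) : w <> (0%Z, 0%Z) ->
  1 <= IZR a * Rabs (lin_form alpha w) * Rabs (lin_form (- alpha) w).
Proof.
  destruct w as [x y]; intros Hw.
  assert (Hint : IZR a * lin_form alpha (x, y) * lin_form (- alpha) (x, y) = IZR (a * x * x - b * y * y)).
  { rewrite minus_IZR, !mult_IZR, <- alpha_sq; unfold lin_form; cbn [fst snd]; ring. }
  rewrite <- (Rabs_right (IZR a)) by (apply Rle_ge, IZR_le; lia).
  rewrite <- !Rabs_mult, Hint, <- abs_IZR.
  apply IZR_le; pose proof (norm_form_nonzero x y Hw); lia.
Qed.


Lemma alpha_approximation (u v : Z) : (0 < v)%Z ->
  Rabs (IZR u / IZR v - alpha) >= / (4 * sqrt (IZR a * IZR b)) / (IZR v ^ 2).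
Proof.
  intros Hv; apply Rle_ge; rewrite sqrt_ab.
  pose proof one_le_alpha as Halpha.
  assert (HA : 1 <= IZR a) by (apply IZR_le; lia).
  assert (HV : 1 <= IZR v) by (apply IZR_le; lia).
  set (d := Rabs (IZR u / IZR v - alpha)).
  apply (inv_le_of_cases _ _ _ alpha); [nra | nra | |].
  - assert (1 <= IZR b) by (apply IZR_le; lia).
    pose proof alpha_sq; nra.
  - intros Hd.
    pose proof (norm_form_lower_bound (u, v) ltac:(intros E; injection E; lia)) as Hnorm.
    unfold lin_form in Hnorm; cbn [fst snd] in Hnorm.
    assert (Hminus : Rabs (IZR u - alpha * IZR v) = IZR v * d).
    { replace (IZR u - alpha * IZR v) with (IZR v * (IZR u / IZR v - alpha)) by (field; lra).
      rewrite Rabs_mult, (Rabs_right (IZR v)) by lra; reflexivity. }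
    assert (Hplus : Rabs (IZR u - - alpha * IZR v) <= IZR v * (3 * alpha)).
    { replace (IZR u - - alpha * IZR v) with (IZR v * ((IZR u / IZR v - alpha) + 2 * alpha))
        by (field; lra).
      rewrite Rabs_mult, (Rabs_right (IZR v)) by lra.
      apply Rmult_le_compat_l; [lra |].
      pose proof (Rabs_triang (IZR u / IZR v - alpha) (2 * alpha)) as Htri.
      rewrite (Rabs_right (2 * alpha)) in Htri by lra; fold d in Htri; lra. }
    rewrite Hminus in Hnorm.
    assert (0 <= d) by apply Rabs_pos.
    assert (IZR a * (IZR v * d) * Rabs (IZR u - - alpha * IZR v)
            <= IZR a * (IZR v * d) * (IZR v * (3 * alpha)))
      by (apply Rmult_le_compat_l; [repeat apply Rmult_le_pos; lra | exact Hplus]).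
    nra.
Qed.


Lemma cross_terms_bound (e1 e2 : vec) :
  IZR a * (Rabs (lin_form alpha e1) * Rabs (lin_form (- alpha) e2)
           + Rabs (lin_form alpha e2) * Rabs (lin_form (- alpha) e2)
           + Rabs (lin_form alpha e2) * Rabs (lin_form (- alpha) e1))
  <= 4 * IZR b * (2 * IZR (supnorm e1) * IZR (supnorm e2) + IZR (supnorm e2) * IZR (supnorm e2)).
Proof.
  pose proof one_le_alpha as Halpha.
  assert (Hs : IZR a * ((1 + alpha) * (1 + alpha)) <= 4 * IZR b).
  { rewrite <- alpha_sq. assert (0 < IZR a) by (apply IZR_lt; lia).
    replace (4 * (IZR a * (alpha * alpha))) with (IZR a * (4 * (alpha * alpha))) by ring.
    apply Rmult_le_compat_l; nra. }
  set (s := 1 + alpha) in *.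
  assert (Hbound : forall t w, Rabs t = alpha -> Rabs (lin_form t w) <= s * IZR (supnorm w))
    by (intros t w Ht; unfold s; rewrite <- Ht; apply lin_form_bound).
  assert (Hp : Rabs alpha = alpha) by (apply Rabs_right; lra).
  assert (Hm : Rabs (- alpha) = alpha) by (rewrite Rabs_Ropp; exact Hp).
  pose proof (Hbound _ e1 Hp) as L1; pose proof (Hbound _ e2 Hp) as L2.
  pose proof (Hbound _ e1 Hm) as P1; pose proof (Hbound _ e2 Hm) as P2.
  assert (N1 : 0 <= IZR (supnorm e1)) by (apply IZR_le; unfold supnorm; lia).
  assert (N2 : 0 <= IZR (supnorm e2)) by (apply IZR_le; unfold supnorm; lia).
  assert (0 < IZR a) by (apply IZR_lt; lia).
  pose proof (Rabs_pos (lin_form alpha e1)); pose proof (Rabs_pos (lin_form alpha e2)).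
  pose proof (Rabs_pos (lin_form (- alpha) e1)); pose proof (Rabs_pos (lin_form (- alpha) e2)).
  set (K := Rabs (lin_form alpha e1) * Rabs (lin_form (- alpha) e2)
           + Rabs (lin_form alpha e2) * Rabs (lin_form (- alpha) e2)
           + Rabs (lin_form alpha e2) * Rabs (lin_form (- alpha) e1)).
  assert (HK : K <= s * s * (2 * IZR (supnorm e1) * IZR (supnorm e2)
                             + IZR (supnorm e2) * IZR (supnorm e2))).
  { unfold K.
    assert (Rabs (lin_form alpha e1) * Rabs (lin_form (- alpha) e2)
            <= s * IZR (supnorm e1) * (s * IZR (supnorm e2))) by (apply Rmult_le_compat; auto).
    assert (Rabs (lin_form alpha e2) * Rabs (lin_form (- alpha) e2)
            <= s * IZR (supnorm e2) * (s * IZR (supnorm e2))) by (apply Rmult_le_compat; auto).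
    assert (Rabs (lin_form alpha e2) * Rabs (lin_form (- alpha) e1)
            <= s * IZR (supnorm e2) * (s * IZR (supnorm e1))) by (apply Rmult_le_compat; auto).
    nra. }
  apply Rle_trans with (IZR a * (s * s) * (2 * IZR (supnorm e1) * IZR (supnorm e2)
                                          + IZR (supnorm e2) * IZR (supnorm e2))).
  - rewrite Rmult_assoc; apply Rmult_le_compat_l; lra.
  - apply Rmult_le_compat_r; [nra | exact Hs].
Qed.


Lemma theta_approximation (e1 e2 : vec) (u v : Z) :
  full_rank e1 e2 ->
  (2 * supnorm e1 * supnorm e2 + supnorm e2 * supnorm e2 <= 24 * lattice_det e1 e2)%Z ->
  (0 < v)%Z ->
  Rabs (IZR u / IZR v - - (lin_form alpha e1 / lin_form alpha e2)) >=
    / (162 * IZR b * IZR (lattice_det e1 e2)) / (IZR v ^ 2).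
Proof.
  intros Hfr Hnorms Hv; apply Rle_ge.
  destruct (det2_nonzero_neq0 e1 e2 Hfr) as [_ He2].
  assert (HL2 : lin_form alpha e2 <> 0).
  { intros E; pose proof (norm_form_lower_bound e2 He2) as H.
    rewrite E, Rabs_R0 in H; lra. }
  assert (HB : 1 <= IZR b) by (apply IZR_le; lia).
  assert (HD : 1 <= IZR (lattice_det e1 e2)) by (apply IZR_le; unfold lattice_det, full_rank in *; lia).
  assert (HV : 1 <= IZR v) by (apply IZR_le; lia).
  assert (HNR : 2 * IZR (supnorm e1) * IZR (supnorm e2) + IZR (supnorm e2) * IZR (supnorm e2)
                <= 24 * IZR (lattice_det e1 e2))
    by (rewrite <- !mult_IZR, <- plus_IZR; apply IZR_le; exact Hnorms).
  pose proof (cross_terms_bound e1 e2) as Hcross.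
  set (L1 := lin_form alpha e1) in *; set (L2 := lin_form alpha e2) in *.
  set (P1 := lin_form (- alpha) e1) in *; set (P2 := lin_form (- alpha) e2) in *.
  set (theta := - (L1 / L2)).
  set (d := Rabs (IZR u / IZR v - theta)).
  apply (inv_le_of_cases _ _ _ 1); [nra | nra | nra |].
  intros Hd.
  assert (Hx0 : vcomb u v e2 e1 <> (0%Z, 0%Z)).
  { intros E; apply Hfr.
    assert (Hdet : det2 (vcomb u v e2 e1) e2 = (v * det2 e1 e2)%Z)
      by (unfold det2, vcomb; cbn [fst snd]; ring).
    rewrite E in Hdet; cbn in Hdet; nia. }
  pose proof (norm_form_lower_bound _ Hx0) as Hnorm.
  rewrite !lin_form_vcomb in Hnorm; fold L1 L2 P1 P2 in Hnorm.
  assert (Hminus : Rabs (IZR u * L2 + IZR v * L1) = IZR v * Rabs L2 * d).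
  { replace (IZR u * L2 + IZR v * L1) with (IZR v * L2 * (IZR u / IZR v - theta))
      by (unfold theta; field; split; lra).
    rewrite !Rabs_mult, (Rabs_right (IZR v)) by lra; reflexivity. }
  assert (Htheta : Rabs theta * Rabs L2 = Rabs L1).
  { rewrite <- Rabs_mult; unfold theta.
    replace (- (L1 / L2) * L2) with (- L1) by (field; exact HL2); apply Rabs_Ropp. }
  assert (Hu : Rabs (IZR u) <= IZR v * (Rabs theta + 1)).
  { replace (IZR u) with (IZR v * (theta + (IZR u / IZR v - theta))) by (field; lra).
    rewrite Rabs_mult, (Rabs_right (IZR v)) by lra.
    apply Rmult_le_compat_l; [lra |].
    pose proof (Rabs_triang theta (IZR u / IZR v - theta)) as Htri; fold d in Htri; lra. }
  assert (Hplus : Rabs L2 * Rabs (IZR u * P2 + IZR v * P1)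
                  <= IZR v * (Rabs L1 * Rabs P2 + Rabs L2 * Rabs P2 + Rabs L2 * Rabs P1)).
  { pose proof (Rabs_triang (IZR u * P2) (IZR v * P1)) as Htri.
    rewrite !Rabs_mult, (Rabs_right (IZR v)) in Htri by lra.
    pose proof (Rabs_pos L2); pose proof (Rabs_pos P2); pose proof (Rabs_pos P1).
    apply Rle_trans with (Rabs L2 * (IZR v * (Rabs theta + 1) * Rabs P2 + IZR v * Rabs P1)).
    - apply Rmult_le_compat_l; [lra |].
      apply Rle_trans with (1 := Htri).
      apply Rplus_le_compat_r, Rmult_le_compat_r; [lra | exact Hu].
    - rewrite <- Htheta; right; ring. }
  assert (0 <= d) by apply Rabs_pos.
  rewrite Hminus in Hnorm.
  (* 1 <= a v |L2| d |P(x)| <= v^2 d (a K) <= 96 b det v^2 d, where K is the sum of cross terms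
     bounded by [cross_terms_bound] *)
  assert (Hchain : IZR a * (IZR v * Rabs L2 * d) * Rabs (IZR u * P2 + IZR v * P1)
                   <= IZR v ^ 2 * d * (4 * IZR b * (24 * IZR (lattice_det e1 e2)))).
  { assert (0 < IZR a) by (apply IZR_lt; lia).
    apply Rle_trans with (IZR v * d * (IZR a * (IZR v * (Rabs L1 * Rabs P2
                            + Rabs L2 * Rabs P2 + Rabs L2 * Rabs P1)))).
    - replace (IZR a * (IZR v * Rabs L2 * d) * Rabs (IZR u * P2 + IZR v * P1))
        with (IZR v * d * (IZR a * (Rabs L2 * Rabs (IZR u * P2 + IZR v * P1)))) by ring.
      apply Rmult_le_compat_l; [nra |]. apply Rmult_le_compat_l; lra.
    - replace (IZR v * d * (IZR a * (IZR v * (Rabs L1 * Rabs P2 + Rabs L2 * Rabs P2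
                                              + Rabs L2 * Rabs P1))))
        with (IZR v ^ 2 * d * (IZR a * (Rabs L1 * Rabs P2 + Rabs L2 * Rabs P2
                                         + Rabs L2 * Rabs P1))) by ring.
      apply Rmult_le_compat_l; [nra |]. nra. }
  assert (0 <= IZR v ^ 2 * d * (IZR b * IZR (lattice_det e1 e2))) by (repeat apply Rmult_le_pos; nra).
  nra.
Qed.

End QuadraticIrrational.

Theorem mainTheorem14 (a b : Z) (e1 e2 : vec) (nu1 nu2 : Z) :
  (0 < a)%Z -> (a < b)%Z -> Z.gcd a b = 1%Z ->
  irrational (sqrt (IZR b / IZR a)) ->
  full_rank e1 e2 ->
  is_first_minimum e1 e2 nu1 -> is_second_minimum e1 e2 nu2 ->
  (supnorm e1 <= 2 * nu2)%Z -> (supnorm e2 <= 2 * nu1)%Z ->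
  let alpha := sqrt (IZR b / IZR a) in
  let theta := - ((IZR (fst e1) - alpha * IZR (snd e1)) /
                  (IZR (fst e2) - alpha * IZR (snd e2))) in
  forall u v : Z, (0 < u)%Z -> (0 < v)%Z ->
    Rabs (IZR u / IZR v - alpha) >= / (4 * sqrt (IZR a * IZR b)) / (IZR v ^ 2) /\
    Rabs (IZR u / IZR v - theta) >=
      / (162 * IZR b * IZR (lattice_det e1 e2)) / (IZR v ^ 2).
Proof.
  intros Ha Hab _ Hirr Hfr Hm1 Hm2 HN1 HN2 alpha theta u v _ Hv.
  assert (Hle : (a <= b)%Z) by lia.
  split.
  - apply alpha_approximation; assumption.
  - apply theta_approximation; try assumption.
    exact (reduced_basis_norms e1 e2 nu1 nu2 Hfr Hm1 Hm2 HN1 HN2).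
Qed.
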